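(* Let $B_1,\dots,B_n$ be $n\times n$ complex Hadamard matrices (normalized so that all entries have absolute value $1/\sqrt n$), and let $B=[B_1\,|\,B_2\,|\cdots|\,B_n]$ be the $n\times n^2$ matrix whose columns are all columns of all $B_i$. Let $w_1,\dots,w_n\in\mathbb{C}^{n^2}$ be the rows of $B$. Then $\{B_1,\dots,B_n\}$ is a complete system of mutually unbiased Hadamards if and only if the vectors $w_i\circ w_j$, $1\le i\le j\le n$, are pairwise orthogonal (i.e. $\langle w_i\circ w_j| w_k\circ w_l\rangle=0$ whenever $\{i,j\}\neq\{k,l\}$ as multisets).
   Context: A complex Hadamard matrix is an $n\times n$ unitary matrix all of whose entries have the same absolute value $1/\sqrt{n}$. Two such matrices are mutually unbiased if $|\langle x|y\rangle|=1/\sqrt n$ for every column $x$ of one and every column $y$ of the other. A complete system of mutually unbiased Hadamards (MUHs) in $\mathbb{C}^n$ is a set of $n$ complex Hadamard matrices that are pairwise mutually unbiased (equivalently, together with the identity matrix their column sets form $n+1$ mutually unbiased bases). $\circ$ is the entrywise (Schur) product; $\langle x|y\rangle=\sum_t\overline{x_t}y_t$. *)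

(* Complex numbers are modelled by an arbitrary
   numClosedFieldType C (e.g. algC). *)
From HB Require Import structures.
From mathcomp Require Import all_boot all_order all_algebra.
Set Implicit Arguments. Unset Strict Implicit. Unset Printing Implicit Defensive.
Import Order.TTheory GRing.Theory Num.Theory.
Local Open Scope ring_scope.

Definition dotv (C : numClosedFieldType) (I : finType) (x y : I -> C) : C :=
  \sum_(t : I) (x t)^* * y t.

Definition colv (C : numClosedFieldType) (n : nat) (U : 'M[C]_n) (j : 'I_n)
  : 'I_n -> C := fun t => U t j.

Definition unitary (C : numClosedFieldType) (n : nat) (U : 'M[C]_n) : Prop :=
  (map_mx Num.conj U)^T *m U = 1%:M.

Definition hadamard (C : numClosedFieldType) (n : nat) (U : 'M[C]_n) : Prop :=
  unitary U /\ forall i j : 'I_n, `|U i j| = (sqrtC (n%:R : C))^-1.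

Definition mutually_unbiased (C : numClosedFieldType) (n : nat) (U V : 'M[C]_n)
  : Prop :=
  forall a b : 'I_n, `|dotv (colv U a) (colv V b)| = (sqrtC (n%:R : C))^-1.

Definition complete_MUH (C : numClosedFieldType) (n : nat)
  (Bs : 'I_n -> 'M[C]_n) : Prop :=
  (forall k, hadamard (Bs k)) /\
  (forall k l : 'I_n, k != l -> mutually_unbiased (Bs k) (Bs l)).

(* row i of B = [B_1 | ... | B_n], with columns indexed by pairs (k, c):
   column (k, c) of B is column c of B_k *)
Definition rowB (C : numClosedFieldType) (n : nat) (Bs : 'I_n -> 'M[C]_n)
  (i : 'I_n) : 'I_n * 'I_n -> C := fun m => Bs m.1 i m.2.

Definition schur (C : numClosedFieldType) (I : finType) (x y : I -> C) : I -> C :=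
  fun t => x t * y t.

From HB Require Import structures.
From mathcomp Require Import all_boot all_order all_algebra ring zify.
Set Implicit Arguments. Unset Strict Implicit. Unset Printing Implicit Defensive.
Import Order.TTheory GRing.Theory Num.Theory.
Local Open Scope ring_scope.

(* Proof by a frame-potential argument.  Write M((i,j),(k,l)) for
   <w_i o w_j | w_k o w_l> and G(t,s) for the inner product of columns t and s
   of B = [B_1 | ... | B_n].
   1. For any family of vectors, sum_{x,y} |M(x,y)|^2 = sum_{t,s} |G(t,s)|^4
      ([schur_frame]); both sides expand to the same quadruple sum.
   2. Each w_i has entries of modulus 1/sqrt n, so M(x,x) = M(x,x') = 1 where
      x' is x with its indices swapped; the rest of row x is the "off-diagonal
      mass" [offdiag x] >= 0.
   3. The block G((p,_),(p,_)) is the identity; for p <> q the n^2 numbers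
      |G((p,c),(q,d))|^2 sum to n by Parseval, so the variance identity gives
      sum |G|^4 = 1 + [bias p q], where [bias p q] >= 0 vanishes exactly when
      B_p and B_q are mutually unbiased.
   4. Counting the constant contributions, 1. becomes
      sum_x offdiag x = sum_{p <> q} bias p q  ([frame_balance]).
   Both sides are sums of nonnegative terms, so one vanishes iff the other
   does, which is the theorem. *)

Section GeneralIdentities.
Variable C : numClosedFieldType.

Lemma sum_pairs (I J : finType) (F : I * J -> C) :
  \sum_x F x = \sum_i \sum_j F (i, j).
Proof. by rewrite pair_bigA; apply: eq_bigr => -[]. Qed.

Lemma mul_sums (I : finType) (F G : I -> C) :
  (\sum_i F i) * (\sum_j G j) = \sum_(x : I * I) F x.1 * G x.2.
Proof. by rewrite big_distrlr /= pair_bigA. Qed.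

Lemma sum_kronecker (I : finType) (F : I -> C) (i : I) :
  \sum_j F j * (i == j)%:R = F i.
Proof.
rewrite (bigD1 i) //= eqxx mulr1 big1 ?addr0 // => j ji.
by rewrite eq_sym (negbTE ji) mulr0.
Qed.

Lemma psumr2_eq0 (I J : finType) (P : pred I) (Q : I -> pred J)
    (F : I -> J -> C) :
  (forall i j, P i -> Q i j -> 0 <= F i j) ->
  \sum_(i | P i) \sum_(j | Q i j) F i j = 0 <->
  (forall i j, P i -> Q i j -> F i j = 0).
Proof.
move=> F_ge0; split=> [sum0 i j Pi Qij | F0]; last first.
  by rewrite big1 // => i Pi; rewrite big1 // => j; apply: F0.
have inner_ge0 a : P a -> 0 <= \sum_(b | Q a b) F a b.
  by move=> Pa; apply: sumr_ge0 => b; apply: F_ge0.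
have inner0 := psumr_eq0P inner_ge0 sum0 Pi.
exact: (psumr_eq0P (fun j => F_ge0 i j Pi) inner0 Qij).
Qed.

Lemma sum_sqr_dev (T : finType) (F : T -> C) (a : C) :
  \sum_t F t = #|T|%:R * a ->
  \sum_t (F t - a) ^+ 2 = \sum_t F t ^+ 2 - #|T|%:R * a ^+ 2.
Proof.
move=> mean; under eq_bigr do rewrite sqrrB.
rewrite !big_split /= sumrN sumr_const sumrMnl -mulr_suml mean; ring.
Qed.

Lemma schur_frame (I J : finType) (w : I -> J -> C) :
  \sum_(x : I * I) \sum_(y : I * I)
      `|dotv (schur (w x.1) (w x.2)) (schur (w y.1) (w y.2))| ^+ 2
  = \sum_(t : J) \sum_(s : J) `|dotv (w^~ t) (w^~ s)| ^+ 4.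
Proof.
under eq_bigr => x _ do under eq_bigr => y _ do
  rewrite normCK /dotv rmorph_sum big_distrlr /=.
rewrite exchange_big /=; under eq_bigr => x _ do rewrite exchange_big /=.
rewrite exchange_big /=; apply: eq_bigr => t _.
under eq_bigr => x _ do rewrite exchange_big /=.
rewrite exchange_big /=; apply: eq_bigr => s _.
have norm4 (z : C) : `|z| ^+ 4 = (z * z) * (z^* * z^*).
  by rewrite (_ : 4 = 2 * 2)%N // exprM normCK expr2 mulrACA.
rewrite norm4 !rmorph_sum /= !mul_sums [RHS]sum_pairs exchange_big /=.
apply: eq_bigr => y _; apply: eq_bigr => x _.
rewrite /schur !rmorphM /= !conjCK; ring.
Qed.

End GeneralIdentities.

Section Unitary.
Variables (C : numClosedFieldType) (n : nat) (U : 'M[C]_n).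
Hypothesis unitU : unitary U.

Lemma unitary_cols c d : dotv (colv U c) (colv U d) = (c == d)%:R.
Proof.
have /matrixP/(_ c d) := unitU; rewrite !mxE => <-.
by apply: eq_bigr => i _; rewrite !mxE.
Qed.

(* ... and so are its rows, since a one-sided inverse is two-sided. *)
Lemma unitary_rows i j : \sum_c U i c * (U j c)^* = (i == j)%:R.
Proof.
have /mulmx1C/matrixP/(_ i j) := unitU; rewrite !mxE => <-.
by apply: eq_bigr => c _; rewrite !mxE.
Qed.

Lemma parseval (x : 'I_n -> C) :
  \sum_d `|dotv x (colv U d)| ^+ 2 = dotv x x.
Proof.
have expand d : `|dotv x (colv U d)| ^+ 2 =
    \sum_i \sum_j (x i)^* * x j * (U i d * (U j d)^*).
  rewrite normCK /dotv rmorph_sum big_distrlr /=; apply: eq_bigr => i _.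
  apply: eq_bigr => j _.
  by rewrite rmorphM /= conjCK mulrACA.
under eq_bigr do rewrite expand.
rewrite exchange_big /=; apply: eq_bigr => i _.
rewrite exchange_big /=.
under eq_bigr => j _ do rewrite -mulr_sumr unitary_rows.
exact: sum_kronecker.
Qed.

End Unitary.

Lemma unitary_overlap (C : numClosedFieldType) (n : nat) (U V : 'M[C]_n) :
  unitary U -> unitary V ->
  \sum_c \sum_d `|dotv (colv U c) (colv V d)| ^+ 2 = n%:R.
Proof.
move=> unitU unitV; under eq_bigr do rewrite parseval // unitary_cols // eqxx.
by rewrite sumr_const card_ord.
Qed.

Section SchurSystem.
Variables (C : numClosedFieldType) (n : nat) (Bs : 'I_n -> 'M[C]_n).

Definition gram (t s : 'I_n * 'I_n) : C :=
  dotv (colv (Bs t.1) t.2) (colv (Bs s.1) s.2).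

Definition bias (p q : 'I_n) : C :=
  \sum_c \sum_d (`|gram (p, c) (q, d)| ^+ 2 - n%:R^-1) ^+ 2.

Definition schur_dot (x y : 'I_n * 'I_n) : C :=
  dotv (schur (rowB Bs x.1) (rowB Bs x.2)) (schur (rowB Bs y.1) (rowB Bs y.2)).

(* The index pairs denoting the same multiset as x. *)
Definition twins (x : 'I_n * 'I_n) : {set 'I_n * 'I_n} := [set x; (x.2, x.1)].

Definition offdiag (x : 'I_n * 'I_n) : C :=
  \sum_(y | y \notin twins x) `|schur_dot x y| ^+ 2.

Lemma card_twins x : #|twins x| = (x.1 != x.2).+1.
Proof. by case: x => i j; rewrite cards2 xpair_eqE /= [j == i]eq_sym andbb. Qed.

Definition sortp (x : 'I_n * 'I_n) : 'I_n * 'I_n :=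
  if (x.1 <= x.2)%N then x else (x.2, x.1).

Lemma sortp_sorted x : ((sortp x).1 <= (sortp x).2)%N.
Proof. by case: x => i j; rewrite /sortp /=; case: (leqP i j) => // /ltnW. Qed.

Lemma sortp_id (x : 'I_n * 'I_n) : (x.1 <= x.2)%N -> sortp x = x.
Proof. by rewrite /sortp => ->. Qed.

Lemma mem_twins x y : (y \in twins x) = (sortp y == sortp x).
Proof.
case: x y => [i j] [k l]; rewrite /twins /sortp in_set2 /=.
by case: (leqP i j) => hij; case: (leqP k l) => hkl;
  rewrite /= !xpair_eqE -!val_eqE /=; lia.
Qed.

Lemma schur_dot_swapl i j y : schur_dot (j, i) y = schur_dot (i, j) y.
Proof.
rewrite /schur_dot /dotv; apply: eq_bigr => t _.
by rewrite /schur /= [rowB _ j _ * _]mulrC.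
Qed.

Lemma schur_dot_swapr x k l : schur_dot x (l, k) = schur_dot x (k, l).
Proof.
rewrite /schur_dot /dotv; apply: eq_bigr => t _.
by rewrite /schur /= [rowB _ l _ * _]mulrC.
Qed.

Lemma schur_dot_sortp x y : schur_dot (sortp x) (sortp y) = schur_dot x y.
Proof.
case: x y => [i j] [k l]; rewrite /sortp /=.
case: (leqP i j) => _; case: (leqP k l) => _ //; first exact: schur_dot_swapr.
  exact: schur_dot_swapl.
by rewrite schur_dot_swapl schur_dot_swapr.
Qed.

Lemma sorted_offdiag_iff :
  (forall i j k l : 'I_n, (i <= j)%N -> (k <= l)%N -> (i, j) != (k, l) ->
     schur_dot (i, j) (k, l) = 0) <->
  (forall x y, y \notin twins x -> schur_dot x y = 0).
Proof.
split=> [sorted0 x y | offdiag0 i j k l hij hkl neq].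
  rewrite mem_twins -schur_dot_sortp eq_sym => neq.
  by case: (sortp x) (sortp y) (sortp_sorted x) (sortp_sorted y) neq
    => i j [k l]; apply: sorted0.
by apply: offdiag0; rewrite mem_twins !sortp_id // eq_sym.
Qed.

Lemma offdiag_zero_iff :
  (forall x y, y \notin twins x -> schur_dot x y = 0) <->
  \sum_x offdiag x = 0.
Proof.
have sqr_ge0 x y : 0 <= `|schur_dot x y| ^+ 2 by rewrite exprn_ge0.
rewrite (psumr2_eq0 (fun x y _ _ => sqr_ge0 x y)).
split=> [offdiag0 x y _ yx | sqr0 x y yx].
  by rewrite offdiag0 ?normr0 ?expr0n.
by apply/eqP; rewrite -normr_eq0 -sqrf_eq0 sqr0.
Qed.

(* [bias p q] is a sum of squares of real numbers... *)
Lemma bias_ge0 p q c d : 0 <= (`|gram (p, c) (q, d)| ^+ 2 - n%:R^-1) ^+ 2.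
Proof. by rewrite -realEsqr rpredB ?rpredV ?rpredX ?realn ?normr_real. Qed.

Lemma bias_eq0 p q : bias p q = 0 <-> mutually_unbiased (Bs p) (Bs q).
Proof.
rewrite (psumr2_eq0 (fun c d _ _ => bias_ge0 p q c d)).
have inv_sqrt_ge0 : 0 <= (sqrtC (n%:R : C))^-1 by rewrite invr_ge0 sqrtC_ge0.
have sqr_invsqrt : (sqrtC (n%:R : C))^-1 ^+ 2 = n%:R^-1.
  by rewrite exprVn sqrtCK.
split=> [dev0 c d | unbiased c d _ _].
  have /eqP := dev0 c d isT isT; rewrite expf_eq0 /= subr_eq0 -sqr_invsqrt.
  by rewrite eqrXn2 ?normr_ge0 // => /eqP.
by rewrite [gram _ _]/= unbiased sqr_invsqrt subrr expr0n.
Qed.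

Lemma unbiased_iff_bias0 :
  (forall p q : 'I_n, p != q -> mutually_unbiased (Bs p) (Bs q)) <->
  \sum_p \sum_(q | q != p) bias p q = 0.
Proof.
have bias_sum_ge0 p q : 0 <= bias p q.
  by apply: sumr_ge0 => c _; apply: sumr_ge0 => d _; apply: bias_ge0.
rewrite (psumr2_eq0 (fun p q _ _ => bias_sum_ge0 p q)).
split=> [unbiased p q _ qp | bias0 p q pq]; apply/bias_eq0.
  by apply: unbiased; rewrite eq_sym.
by apply: bias0; rewrite // eq_sym.
Qed.

Hypothesis hadB : forall k, hadamard (Bs k).
Hypothesis n_gt0 : (0 < n)%N.

(* The characteristic is 0, so n is invertible in C when n > 0. *)
Lemma n_neq0 : (n%:R : C) != 0.
Proof. by rewrite pnatr_eq0 -lt0n. Qed.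

Lemma entry_sqr p i c : `|Bs p i c| ^+ 2 = n%:R^-1.
Proof. by have [_ ->] := hadB p; rewrite exprVn sqrtCK. Qed.

Lemma schur_dot_diag x : schur_dot x x = 1.
Proof.
rewrite /schur_dot /dotv.
under eq_bigr do rewrite mulrC -normCK /schur normrM exprMn /rowB !entry_sqr.
rewrite sumr_const card_prod card_ord -[LHS]mulr_natr natrM.
by rewrite mulrACA !mulVf ?n_neq0 ?mulr1.
Qed.

Lemma schur_dot_row x :
  \sum_y `|schur_dot x y| ^+ 2 = (x.1 != x.2).+1%:R + offdiag x.
Proof.
rewrite (bigID (mem (twins x))) /= -card_twins -sumr_const; congr (_ + _).
apply: eq_bigr => y /set2P[] ->; last case: x => i j /=.
  by rewrite schur_dot_diag normr1 expr1n.
by rewrite schur_dot_swapr schur_dot_diag normr1 expr1n.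
Qed.

Lemma gram_block p q :
  \sum_c \sum_d `|gram (p, c) (q, d)| ^+ 4 =
  if p == q then n%:R else 1 + bias p q.
Proof.
have unit k : unitary (Bs k) by have [] := hadB k.
have [<-|_] := eqVneq p q.
  have gram_same c d : gram (p, c) (p, d) = (c == d)%:R.
    exact: unitary_cols.
  rewrite -[n in RHS]card_ord -sumr_const; apply: eq_bigr => c _.
  rewrite (bigD1 c) //= big1 => [|d dc].
    by rewrite gram_same eqxx normr1 expr1n addr0.
  by rewrite gram_same eq_sym (negbTE dc) normr0 expr0n.
have overlap : \sum_c \sum_d `|gram (p, c) (q, d)| ^+ 2 = n%:R.
  exact: (unitary_overlap (unit p) (unit q)).
have mean : \sum_(e : 'I_n * 'I_n) `|gram (p, e.1) (q, e.2)| ^+ 2 =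
    #|{: 'I_n * 'I_n}|%:R * n%:R^-1.
  rewrite sum_pairs /= overlap card_prod card_ord natrM.
  by rewrite -mulrA mulfV ?n_neq0 ?mulr1.
have := sum_sqr_dev mean; rewrite !sum_pairs /= card_prod card_ord natrM.
rewrite -expr2 exprVn mulfV ?expf_neq0 ?n_neq0 // => dev.
rewrite /bias dev addrC subrK; apply: eq_bigr => c _; apply: eq_bigr => d _.
by rewrite -exprM.
Qed.

(* The frame identity, after removing the constant contributions; [others p]
   is the number n - 1 of indices q <> p. *)
Lemma frame_balance : \sum_x offdiag x = \sum_p \sum_(q | q != p) bias p q.
Proof.
have frame : \sum_x \sum_y `|schur_dot x y| ^+ 2 =
    \sum_t \sum_s `|gram t s| ^+ 4 := schur_frame (rowB Bs).
pose others (p : 'I_n) : C := \sum_(q | q != p) 1.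
have lhs : \sum_x \sum_y `|schur_dot x y| ^+ 2 =
    \sum_p (1 + others p *+ 2) + \sum_x offdiag x.
  under eq_bigr do rewrite schur_dot_row.
  rewrite big_split /= sum_pairs; congr (_ + _); apply: eq_bigr => p _.
  rewrite (bigD1 p) //= eqxx /= /others -sumrMnl; congr (_ + _).
  by apply: eq_bigr => q qp; rewrite eq_sym qp.
have rhs : \sum_t \sum_s `|gram t s| ^+ 4 =
    \sum_p (1 + others p *+ 2 + \sum_(q | q != p) bias p q).
  rewrite sum_pairs; apply: eq_bigr => p _.
  have -> : \sum_c \sum_s `|gram (p, c) s| ^+ 4 =
      \sum_q \sum_c \sum_d `|gram (p, c) (q, d)| ^+ 4.
    by rewrite [RHS]exchange_big; apply: eq_bigr => c _; rewrite sum_pairs.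
  have off : \sum_(q | q != p) \sum_c \sum_d `|gram (p, c) (q, d)| ^+ 4 =
      others p + \sum_(q | q != p) bias p q.
    rewrite /others -big_split; apply: eq_bigr => q qp.
    by rewrite gram_block eq_sym (negbTE qp).
  have n_eq : n%:R = 1 + others p.
    by rewrite -[n in LHS]card_ord -sumr_const (bigD1 p).
  by rewrite (bigD1 p) //= gram_block eqxx off n_eq mulr2n !addrA.
by move: frame; rewrite lhs rhs [in X in _ = X]big_split /= => /addrI.
Qed.

End SchurSystem.

Theorem theorem6 (C : numClosedFieldType) (n : nat) (Bs : 'I_n -> 'M[C]_n) :
  (forall k, hadamard (Bs k)) ->
  (complete_MUH Bs <->
   forall i j k l : 'I_n, (i <= j)%N -> (k <= l)%N -> (i, j) != (k, l) ->
     dotv (schur (rowB Bs i) (rowB Bs j)) (schur (rowB Bs k) (rowB Bs l)) = 0).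
Proof.
move=> hadB; have [n0|n_gt0] := posnP n.
  by subst n; split=> [_ [] //|_]; split=> // [[]].
have balance := frame_balance hadB n_gt0.
split=> [[_ unbiased] | sorted0].
- apply/(sorted_offdiag_iff Bs)/(offdiag_zero_iff Bs); rewrite balance.
  exact/(unbiased_iff_bias0 Bs).
- split=> //; apply/(unbiased_iff_bias0 Bs); rewrite -balance.
  exact/(offdiag_zero_iff Bs)/(sorted_offdiag_iff Bs).
Qed.
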